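(* Let $\Gamma_1\vdash t:\tau$ and $\Gamma_2\vdash s:\rho$ with $\Gamma_1$ and $\Gamma_2$ disjoint, and let $x$ be a variable. Then $\pi(t[s/x])\preccurlyeq\pi(t)+\pi(s)$.
   Context: Types: $\rho,\tau::=\Diamond\mid\mathbf{B}\mid\tau\multimap\rho\mid\tau\otimes\rho\mid\tau\times\rho\mid\mathbf{L}(\tau)$. Raw terms: $r,s,t::=x^\tau\mid c\mid\lambda x^\tau.\,t\mid\langle t,s\rangle\mid ts\mid\{t\}$, where each variable $x^\tau$ carries a type (infinitely many variables of each type), application associates to the left, terms are identified up to renaming of bound variables ($\lambda$ is the only binder), and the constants $c$ with their types are $\mathsf{tt},\mathsf{ff}:\mathbf{B}$; $\mathsf{nil}_\tau:\mathbf{L}(\tau)$; $\mathsf{cons}_\tau:\Diamond\multimap\tau\multimap\mathbf{L}(\tau)\multimap\mathbf{L}(\tau)$; $\otimes_{\tau,\rho}:\tau\multimap\rho\multimap\tau\otimes\rho$. A context is a finite set of typed variables; $\Gamma_1,\Gamma_2$ denotes $\Gamma_1\cup\Gamma_2$ and presupposes $\Gamma_1\cap\Gamma_2=\emptyset$; $x^\tau$ also denotes $\{x^\tau\}$. The relation $\Gamma\vdash t:\tau$ is inductively defined by: (Var) $\Gamma,x^\tau\vdash x:\tau$; (Const) $\Gamma\vdash c:\tau$ for a constant $c$ of type $\tau$; ($\multimap^+$) from $\Gamma\cup\{x^\tau\}\vdash t:\rho$ infer $\Gamma\vdash\lambda x^\tau.t:\tau\multimap\rho$; ($\multimap^-$)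 from $\Gamma_1\vdash t:\tau\multimap\rho$ and $\Gamma_2\vdash s:\tau$ infer $\Gamma_1,\Gamma_2\vdash ts:\rho$; ($\times^+$) from $\Gamma\vdash t:\tau$ and $\Gamma\vdash s:\rho$ infer $\Gamma\vdash\langle t,s\rangle:\tau\times\rho$; ($\times^-_1$) from $\Gamma\vdash t:\tau\times\rho$ infer $\Gamma\vdash t\,\mathsf{tt}:\tau$; ($\times^-_0$) from $\Gamma\vdash t:\tau\times\rho$ infer $\Gamma\vdash t\,\mathsf{ff}:\rho$; ($\mathbf{B}^-$) from $\Gamma_1\vdash t:\mathbf{B}$, $\Gamma_2\vdash s:\tau$, $\Gamma_2\vdash r:\tau$ infer $\Gamma_1,\Gamma_2\vdash t\langle s,r\rangle:\tau$; ($\otimes^-$) from $\Gamma_1\vdash t:\tau\otimes\rho$ and $\Gamma_2,x^\tau,y^\rho\vdash s:\sigma$ infer $\Gamma_1,\Gamma_2\vdash t(\lambda x^\tau.\lambda y^\rho.s):\sigma$; ($\mathbf{L}^-$) from $\Gamma\vdash t:\mathbf{L}(\tau)$ and $\emptyset\vdash s:\Diamond\multimap\tau\multimap\rho\multimap\rho$ infer $\Gamma\vdash t\{s\}:\rho\multimap\rho$. A list with $n$ entries ($n\ge0$) is a term $\mathsf{cons}_\tau d_1a_1(\cdots(\mathsf{cons}_\tau d_na_n\,\mathsf{nil}_\tau)\cdots)$ with $d_i$ arbitrary terms of type $\Diamond$ and $a_i$ arbitrary terms of type $\tau$. Length: $\mathrm{len}(c)=\mathrm{len}(x)=1$; $\mathrm{len}(ts)=\mathrm{len}(t)+\mathrm{len}(s)$;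 $\mathrm{len}(\lambda x.s)=\mathrm{len}(s)+1$; $\mathrm{len}(\langle t,s\rangle)=\max(\mathrm{len}(t),\mathrm{len}(s))+1$; $\mathrm{len}(\{t\})=0$. $\mathbb{N}^{\mathrm{poly}}$ is the set of functions $\mathbb{N}\to\mathbb{N}$ pointwise bounded by a polynomial; $X$ is the identity, $X_n(m)=\min(n,m)$, natural numbers are identified with constant functions, $+,\cdot,\sup$ are pointwise sum, product and maximum, and $\preccurlyeq$ is the pointwise order. For every raw term $t$ define $\pi(t)\in\mathbb{N}^{\mathrm{poly}}$ by recursion: $\pi(x)=\pi(c)=0$; $\pi(ts)=\pi(t)+X_n\cdot\pi(h)+X_n\cdot\mathrm{len}(h)$ if $t$ is a list with $n$ entries and $s=\{h\}$, and $\pi(ts)=\pi(t)+\pi(s)$ otherwise; $\pi(\lambda x.t)=\pi(t)$; $\pi(\langle t,s\rangle)=\sup(\pi(t),\pi(s))$; $\pi(\{h\})=X\cdot\pi(h)+X\cdot\mathrm{len}(h)$. *)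

From Stdlib Require Import Arith List.
Import ListNotations.

(* Types: ◇ | B | τ ⊸ ρ | τ ⊗ ρ | τ × ρ | L(τ) *)
Inductive ty : Type :=
| Dia : ty
| Bool : ty
| Lolli : ty -> ty -> ty
| Tens : ty -> ty -> ty
| With : ty -> ty -> ty
| Lst : ty -> ty.

Definition ty_eq_dec (a b : ty) : {a = b} + {a <> b}.
Proof. decide equality. Defined.

Definition var : Type := (nat * ty)%type.

Definition var_eq_dec (a b : var) : {a = b} + {a <> b}.
Proof. decide equality; [apply ty_eq_dec | decide equality]. Defined.

Definition var_ty (v : var) : ty := snd v.

Inductive const : Type :=
| Ctt : const
| Cff : const
| Cnil : ty -> const
| Ccons : ty -> const
| Ctens : ty -> ty -> const.

Definition const_ty (c : const) : ty :=
  match c with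
  | Ctt => Bool
  | Cff => Bool
  | Cnil t => Lst t
  | Ccons t => Lolli Dia (Lolli t (Lolli (Lst t) (Lst t)))
  | Ctens t r => Lolli t (Lolli r (Tens t r))
  end.

(* Raw terms modulo alpha-equivalence, in locally nameless representation:
   bound variables are de Bruijn indices, free variables are typed names.
   [lam τ t] is λx^τ. t ; [pair t s] is ⟨t,s⟩ ; [app t s] is t s ;
   [brace t] is {t}. *)
Inductive term : Type :=
| bvar : nat -> term
| fvar : var -> term
| cst : const -> term
| lam : ty -> term -> term
| pair : term -> term -> term
| app : term -> term -> term
| brace : term -> term.

Fixpoint open_rec (k : nat) (u : term) (t : term) : term :=
  match t with
  | bvar i => if Nat.eqb i k then u else bvar i
  | fvar v => fvar v
  | cst c => cst c
  | lam T b => lam T (open_rec (S k) u b)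
  | pair a b => pair (open_rec k u a) (open_rec k u b)
  | app a b => app (open_rec k u a) (open_rec k u b)
  | brace a => brace (open_rec k u a)
  end.

Definition open1 (t : term) (y : var) : term := open_rec 0 (fvar y) t.
(* body of two nested binders λx.λy.s, instantiated with x (outer) and y (inner) *)
Definition open2 (t : term) (x y : var) : term :=
  open_rec 0 (fvar y) (open_rec 1 (fvar x) t).

Fixpoint fv (t : term) : list var :=
  match t with
  | bvar _ => []
  | fvar v => [v]
  | cst _ => []
  | lam _ b => fv b
  | pair a b => fv a ++ fv b
  | app a b => fv a ++ fv b
  | brace a => fv a
  end.

(* Substitution t[s/x] of the term s for the free variable x
   (capture-avoiding by construction of the locally nameless syntax). *)
Fixpoint subst (x : var) (s : term) (t : term) : term :=
  match t with
  | bvar i => bvar i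
  | fvar v => if var_eq_dec v x then s else fvar v
  | cst c => cst c
  | lam T b => lam T (subst x s b)
  | pair a b => pair (subst x s a) (subst x s b)
  | app a b => app (subst x s a) (subst x s b)
  | brace a => brace (subst x s a)
  end.

(* Contexts: finite sets of typed variables, represented by lists
   (only membership matters; all rules below are extensional). *)
Definition ctx := list var.
Definition disjoint (G1 G2 : ctx) : Prop := forall v, In v G1 -> ~ In v G2.
Definition is_union (G G1 G2 : ctx) : Prop :=
  forall v, In v G <-> In v G1 \/ In v G2.

Inductive typing : ctx -> term -> ty -> Prop :=
| T_Var : forall G v, In v G -> typing G (fvar v) (var_ty v)
| T_Const : forall G c, typing G (cst c) (const_ty c)
| T_Lam : forall G T R t (y : var),
    var_ty y = T -> ~ In y (fv t) ->
    typing (y :: G) (open1 t y) R ->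
    typing G (lam T t) (Lolli T R)
| T_App : forall G G1 G2 t s T R,
    disjoint G1 G2 -> is_union G G1 G2 ->
    typing G1 t (Lolli T R) -> typing G2 s T ->
    typing G (app t s) R
| T_Pair : forall G t s T R,
    typing G t T -> typing G s R -> typing G (pair t s) (With T R)
| T_Proj1 : forall G t T R,
    typing G t (With T R) -> typing G (app t (cst Ctt)) T
| T_Proj0 : forall G t T R,
    typing G t (With T R) -> typing G (app t (cst Cff)) R
| T_If : forall G G1 G2 t s r T,
    disjoint G1 G2 -> is_union G G1 G2 ->
    typing G1 t Bool -> typing G2 s T -> typing G2 r T ->
    typing G (app t (pair s r)) T
| T_TensE : forall G G1 G2 t s T R S (x y : var),
    disjoint G1 G2 -> is_union G G1 G2 ->
    typing G1 t (Tens T R) ->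
    var_ty x = T -> var_ty y = R -> x <> y ->
    ~ In x G2 -> ~ In y G2 -> ~ In x (fv s) -> ~ In y (fv s) ->
    typing (x :: y :: G2) (open2 s x y) S ->
    typing G (app t (lam T (lam R s))) S
| T_ListE : forall G t s T R,
    typing G t (Lst T) ->
    typing [] s (Lolli Dia (Lolli T (Lolli R R))) ->
    typing G (app t (brace s)) (Lolli R R).

Fixpoint list_entries_of (T : ty) (t : term) : option nat :=
  match t with
  | cst (Cnil T') => if ty_eq_dec T T' then Some 0 else None
  | app (app (app (cst (Ccons T')) _) _) r =>
      if ty_eq_dec T T' then
        match list_entries_of T r with Some n => Some (S n) | None => None end
      else None
  | _ => None
  end.

Definition list_entries (t : term) : option nat :=
  match t with
  | cst (Cnil T) => Some 0
  | app (app (app (cst (Ccons T)) _) _) r =>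
      match list_entries_of T r with Some n => Some (S n) | None => None end
  | _ => None
  end.

Fixpoint len (t : term) : nat :=
  match t with
  | bvar _ => 1
  | fvar _ => 1
  | cst _ => 1
  | app a b => len a + len b
  | lam _ b => len b + 1
  | pair a b => Nat.max (len a) (len b) + 1
  | brace _ => 0
  end.

(* Elements of N^poly are represented as functions nat -> nat
   (every π(t) is a polynomial expression in X and the X_n). *)
Definition npoly := nat -> nat.
Definition ple (f g : npoly) : Prop := forall m, f m <= g m.
Definition padd (f g : npoly) : npoly := fun m => f m + g m.

Fixpoint pi (t : term) : npoly :=
  match t with
  | bvar _ => fun _ => 0
  | fvar _ => fun _ => 0
  | cst _ => fun _ => 0
  | app a b =>
      match list_entries a, b with
      | Some n, brace h =>
          fun m => pi a m + Nat.min n m * pi h m + Nat.min n m * len h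
      | _, _ => fun m => pi a m + pi b m
      end
  | lam _ b => pi b
  | pair a b => fun m => Nat.max (pi a m) (pi b m)
  | brace h => fun m => m * pi h m + m * len h
  end.

(* A well-typed term is linear in each variable [x]: [x] never occurs inside
   a brace [{h}] (braces are typed in the empty context) nor on both sides of
   an application.  In every construct [π] is bounded by the sum (for pairs,
   the maximum) of [π] of the parts, so replacing [x] by [s] costs at most
   [π s], with one exception: an application [t {h}] of a list [t] with [n]
   entries costs [X_n·(π h + len h)] instead of [π {h} = X·(π h + len h)].
   If [x] sits in [t], the substituted list still has [n] entries, so that
   cost is unchanged; if [x] is the argument and [s = {h}], it is at most
   [π s]. *)
From Pilot Require Import Defs.
From Stdlib Require Import Arith List Lia.
(* Re-imported so that [app] denotes the term constructor, not [List.app]. *)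
Import Defs.

(* Both components of a [pair] are typed in the same context, so [x] may
   occur in both. *)
Fixpoint linear_in (x : var) (t : term) : Prop :=
  match t with
  | lam _ b => linear_in x b
  | pair a b => linear_in x a /\ linear_in x b
  | app a b => linear_in x a /\ linear_in x b /\ ~ (In x (fv a) /\ In x (fv b))
  | brace a => ~ In x (fv a)
  | _ => True
  end.

Lemma fv_open_rec_incl k u t : incl (fv t) (fv (open_rec k u t)).
Proof.
  revert k; induction t; simpl; intros k; auto using incl_refl, incl_app_app.
  intros a [].
Qed.

Lemma linear_in_open_rec x k u t : linear_in x (open_rec k u t) -> linear_in x t.
Proof.
  revert k; induction t; simpl; intros k Hlin; auto.
  - eauto.
  - destruct Hlin; split; eauto.
  - destruct Hlin as (Ha & Hb & Hsplit); repeat split; eauto.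
    intros [Ha' Hb']; apply Hsplit; split; apply fv_open_rec_incl; assumption.
  - intros Hx; apply Hlin, fv_open_rec_incl, Hx.
Qed.

Lemma fv_open2_incl t x y : incl (fv t) (fv (open2 t x y)).
Proof.
  intros a Ha; apply fv_open_rec_incl, fv_open_rec_incl, Ha.
Qed.

Lemma incl_cons_notin {A : Type} (l G : list A) y :
  incl l (y :: G) -> ~ In y l -> incl l G.
Proof.
  intros Hincl Hy a Ha; destruct (Hincl a Ha) as [<- | HG]; [contradiction | exact HG].
Qed.

Lemma incl_app_union G G1 G2 l1 l2 :
  is_union G G1 G2 -> incl l1 G1 -> incl l2 G2 -> incl (l1 ++ l2) G.
Proof.
  intros HG H1 H2 a Ha; apply HG; apply in_app_iff in Ha; destruct Ha; auto.
Qed.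

Lemma disjoint_incl_not_both G1 G2 l1 l2 x :
  disjoint G1 G2 -> incl l1 G1 -> incl l2 G2 -> ~ (In x l1 /\ In x l2).
Proof.
  intros Hdisj H1 H2 [Hx1 Hx2]; exact (Hdisj x (H1 x Hx1) (H2 x Hx2)).
Qed.

Lemma open2_fv_incl G s x y :
  incl (fv (open2 s x y)) (x :: y :: G) -> ~ In x (fv s) -> ~ In y (fv s) ->
  incl (fv s) G.
Proof.
  intros Hincl Hx Hy; apply (incl_cons_notin _ _ y); [| exact Hy].
  apply (incl_cons_notin _ _ x); [| exact Hx].
  exact (incl_tran (fv_open2_incl s x y) Hincl).
Qed.

Lemma typing_fv_incl G t T : typing G t T -> incl (fv t) G.
Proof.
  induction 1; simpl.
  - intros a [<- | []]; assumption.
  - apply incl_nil_l.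
  - apply (incl_cons_notin _ _ y); [| assumption].
    exact (incl_tran (fv_open_rec_incl _ _ _) IHtyping).
  - eapply incl_app_union; eassumption.
  - apply incl_app; assumption.
  - rewrite app_nil_r; assumption.
  - rewrite app_nil_r; assumption.
  - eapply incl_app_union; [eassumption .. | apply incl_app; assumption].
  - eapply incl_app_union; [eassumption .. | eapply open2_fv_incl; eassumption].
  - apply incl_app; [assumption | exact (incl_tran IHtyping2 (incl_nil_l G))].
Qed.

Lemma typing_linear_in G t T x : typing G t T -> linear_in x t.
Proof.
  induction 1; simpl; try exact I.
  - eapply linear_in_open_rec; eassumption.
  - repeat split; auto.
    eapply disjoint_incl_not_both; eauto using typing_fv_incl.
  - split; assumption.
  - repeat split; auto; intros [_ []].
  - repeat split; auto; intros [_ []].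
  - repeat split; auto.
    eapply disjoint_incl_not_both;
      [eassumption | eauto using typing_fv_incl | apply incl_app; eauto using typing_fv_incl].
  - repeat split; auto.
    + do 2 eapply linear_in_open_rec; eassumption.
    + eapply disjoint_incl_not_both;
        [eassumption | eauto using typing_fv_incl | eapply open2_fv_incl; eauto using typing_fv_incl].
  - assert (Hclosed : incl (fv s) nil) by (eapply typing_fv_incl; eassumption).
    repeat split; auto.
    + intros Hx; destruct (Hclosed x Hx).
    + intros [_ Hx]; destruct (Hclosed x Hx).
Qed.

Lemma subst_fresh x s t : ~ In x (fv t) -> subst x s t = t.
Proof.
  induction t; simpl; intros Hx; rewrite ?in_app_iff in Hx; f_equal; auto.
  destruct (var_eq_dec v x) as [-> | _]; [exfalso; auto | reflexivity].
Qed.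

Lemma list_entries_of_subst x s T t n :
  list_entries_of T t = Some n -> list_entries_of T (subst x s t) = Some n.
Proof.
  revert n; induction t as [| | c | | | t1 _ t2 IHt2 |]; intros k Hn;
    simpl in Hn; try discriminate.
  - destruct c; try discriminate; exact Hn.
  - destruct t1 as [| | | | | t1 a |]; try discriminate.
    destruct t1 as [| | | | | t1 d |]; try discriminate.
    destruct t1 as [| | c | | | |]; try discriminate.
    destruct c as [| | | U |]; try discriminate.
    simpl; destruct (ty_eq_dec T U); [| discriminate].
    destruct (list_entries_of T t2) as [n2 |]; [| discriminate].
    rewrite (IHt2 n2 eq_refl); exact Hn.
Qed.

Lemma list_entries_subst x s t n :
  list_entries t = Some n -> list_entries (subst x s t) = Some n.
Proof.
  intros Hn; destruct t as [| | c | | | t1 t2 |]; simpl in Hn; try discriminate.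
  - destruct c; try discriminate; exact Hn.
  - destruct t1 as [| | | | | t1 a |]; try discriminate.
    destruct t1 as [| | | | | t1 d |]; try discriminate.
    destruct t1 as [| | c | | | |]; try discriminate.
    destruct c as [| | | U |]; try discriminate.
    simpl; destruct (list_entries_of U t2) as [n2 |] eqn:E; [| discriminate].
    rewrite (list_entries_of_subst x s U t2 n2 E); exact Hn.
Qed.

Lemma pi_app_le a b m : pi (app a b) m <= pi a m + pi b m.
Proof.
  assert (Hmin : forall n k, Nat.min n m * k <= m * k)
    by (intros; apply Nat.mul_le_mono_r, Nat.le_min_r).
  simpl; destruct (list_entries a) as [n |]; [destruct b | ]; simpl; auto.
  pose proof (Hmin n (pi b m)); pose proof (Hmin n (len b)); lia.
Qed.

Lemma pi_app_nonbrace a b m :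
  (forall h, b <> brace h) -> pi (app a b) m = pi a m + pi b m.
Proof.
  intros Hb; simpl; destruct (list_entries a); [destruct b | ]; try reflexivity.
  exfalso; eapply Hb; reflexivity.
Qed.

Lemma pi_app_replace_l a a' b m :
  (forall n, list_entries a = Some n -> list_entries a' = Some n) ->
  pi (app a' b) m + pi a m <= pi (app a b) m + pi a' m.
Proof.
  intros Hentries; destruct (list_entries a) as [n |] eqn:E.
  - simpl; rewrite E, (Hentries n eq_refl); destruct b; lia.
  - assert (Hsum : pi (app a b) m = pi a m + pi b m) by (simpl; rewrite E; reflexivity).
    pose proof (pi_app_le a' b m); lia.
Qed.

Lemma pi_subst_le x s t m :
  linear_in x t -> pi (subst x s t) m <= pi t m + pi s m.
Proof.
  induction t as [| v | | | t1 IH1 t2 IH2 | t1 IH1 t2 IH2 | h _];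
    intros Hlin; cbn [subst linear_in] in *.
  - simpl; lia.
  - destruct (var_eq_dec v x); simpl; lia.
  - simpl; lia.
  - auto.
  - destruct Hlin as [H1 H2]; specialize (IH1 H1); specialize (IH2 H2); simpl; lia.
  - destruct Hlin as (H1 & H2 & Hsplit).
    specialize (IH1 H1); specialize (IH2 H2).
    destruct (in_dec var_eq_dec x (fv t1)) as [Hx1 | Hx1].
    + rewrite (subst_fresh x s t2) by tauto.
      pose proof (pi_app_replace_l t1 (subst x s t1) t2 m
                    (list_entries_subst x s t1)); lia.
    + rewrite (subst_fresh x s t1 Hx1).
      pose proof (pi_app_le t1 (subst x s t2) m).
      pose proof (pi_app_nonbrace t1 t2 m) as Hsum.
      destruct t2 as [| | | | | | h].
      1-6: rewrite Hsum by (intros h'; discriminate); lia.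
      rewrite (subst_fresh x s (brace h)) by exact H2; lia.
  - rewrite (subst_fresh x s h Hlin); lia.
Qed.

Theorem lemma4p7 (G1 G2 : ctx) (t s : term) (T R : ty) (x : var) :
  typing G1 t T -> typing G2 s R -> disjoint G1 G2 ->
  ple (pi (subst x s t)) (padd (pi t) (pi s)).
Proof.
  intros Ht _ _ m.
  apply pi_subst_le, (typing_linear_in _ _ _ x Ht).
Qed.
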